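(* Let $m\geq3$ be an integer and let $k,j$ be integers with $1\leq k\leq j\leq\frac{m+2}{2}$. Define $$K_{m,j,k}=\int_0^\infty\left(\frac{t^{mk-j}}{(1+t^m)^{k-\frac12}}-t^{\frac m2-j}\right)dt\quad\text{if } j\leq\frac{m+1}{2},\qquad K_{m,j,k}=\int_0^\infty\left(\frac{t^{mk-\frac m2-1}}{(1+t^m)^{k-\frac12}}-\frac{1}{t+1}\right)dt\quad\text{if $m$ is even and } j=\frac{m+2}{2}.$$ Then $$K_{m,j,k}=\begin{cases}-\frac2m&\text{if } j=k=1,\\ -\frac{2k-1}{m+2-2j}B\left(k-\frac{j-1}{m},\frac12+\frac{j-1}{m}\right)&\text{if } 1\leq k\leq j\leq\frac{m+1}{2},\ j\neq1,\\ \frac2m\left(\ln2-\frac11-\frac13-\cdots-\frac1{2k-5}-\frac1{2k-3}\right)&\text{if $m$ is even and } 1\leq k\leq j=\frac{m+2}{2},\end{cases}$$ where $B$ is the beta function and the sum $\frac11+\frac13+\cdots+\frac1{2k-3}$ is empty when $k=1$.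
   Context: $B(z,w)=\int_0^1(1-u)^{z-1}u^{w-1}du=\frac{\Gamma(z)\Gamma(w)}{\Gamma(z+w)}$ is the beta function. *)

From Stdlib Require Import Reals.
From Coquelicot Require Import Coquelicot.
Open Scope R_scope.

Definition Beta (z w : R) : R :=
  RInt_gen (fun u => Rpower (1 - u) (z - 1) * Rpower u (w - 1))
           (at_right 0) (at_left 1).

Fixpoint odd_harm (n : nat) : R :=
  match n with
  | O => 0
  | S p => odd_harm p + / INR (2 * p + 1)
  end.

Definition Kint1 (m j k : nat) (t : R) : R :=
  Rpower t (INR m * INR k - INR j) / Rpower (1 + t ^ m) (INR k - / 2)
  - Rpower t (INR m / 2 - INR j).

Definition Kint2 (m k : nat) (t : R) : R :=
  Rpower t (INR m * INR k - INR m / 2 - 1) / Rpower (1 + t ^ m) (INR k - / 2)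
  - / (t + 1).

(* With a = mk - j, c = k - 1/2 and b = m/2 - j, the first integrand is
   t^a (1+t^m)^(-c) - t^b where b = a - mc.  The function
   (t^(a+1) (1+t^m)^(-c) - t^(b+1)) / (b+1) vanishes at 0 and at infinity, and its
   derivative is the integrand plus c/(b+1) times m t^a (1+t^m)^(-c-1); the substitution
   u = 1/(1+t^m) turns the integral of the latter into B((a+1)/m, c+1-(a+1)/m).  The case
   j = k = 1 is then B(1, 1/2) = 2.
   For m = 2n and j = n+1, put y = t^n and x = y/sqrt(1+y^2): the function
   arsinh y - sum_(i<k-1) x^(2i+1)/(2i+1) is a primitive of y^(2k-2)/(1+y^2)^(k-1/2), and
   as t -> oo, arsinh(t^n)/n - ln(t+1) tends to (ln 2)/n while x tends to 1. *)

From Stdlib Require Import Reals Lra Lia.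
From Coquelicot Require Import Coquelicot.
Open Scope R_scope.

Section FilterlimR.
Context {T : Type} {F : (T -> Prop) -> Prop} {FF : Filter F}.

Lemma filterlim_Rplus (f g : T -> R) a b :
  filterlim f F (locally a) -> filterlim g F (locally b) ->
  filterlim (fun x => f x + g x) F (locally (a + b)).
Proof. intros Hf Hg. exact (filterlim_comp_2 f g Rplus Hf Hg (filterlim_plus a b)). Qed.

Lemma filterlim_Rmult (f g : T -> R) a b :
  filterlim f F (locally a) -> filterlim g F (locally b) ->
  filterlim (fun x => f x * g x) F (locally (a * b)).
Proof. intros Hf Hg. exact (filterlim_comp_2 f g Rmult Hf Hg (filterlim_mult a b)). Qed.

Lemma filterlim_Ropp (f : T -> R) a :
  filterlim f F (locally a) -> filterlim (fun x => - f x) F (locally (- a)).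
Proof. intros Hf. exact (filterlim_comp _ _ _ f Ropp F _ _ Hf (filterlim_opp a)). Qed.

Lemma filterlim_Rminus (f g : T -> R) a b :
  filterlim f F (locally a) -> filterlim g F (locally b) ->
  filterlim (fun x => f x - g x) F (locally (a - b)).
Proof. intros Hf Hg. apply filterlim_Rplus; [|apply filterlim_Ropp]; assumption. Qed.

Lemma filterlim_Rabs_le_0 (f g : T -> R) :
  F (fun x => Rabs (f x) <= g x) -> filterlim g F (locally 0) ->
  filterlim f F (locally 0).
Proof.
  intros Hfg Hg.
  apply (filterlim_le_le (F := F) (fun x => - g x) f g (Finite 0)).
  - apply (filter_imp _ _ (fun x H => proj1 (Rabs_le_between _ _) H)), Hfg.
  - rewrite <- Ropp_0. apply filterlim_Ropp, Hg.
  - exact Hg.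
Qed.

End FilterlimR.

Lemma ex_derive_continuous_R (f : R -> R) x : ex_derive f x -> continuous f x.
Proof. exact (ex_derive_continuous f x). Qed.

Lemma filterlim_at_right_continuous (f : R -> R) x :
  continuous f x -> filterlim f (at_right x) (locally (f x)).
Proof. apply filterlim_filter_le_1, filter_le_within. Qed.

Lemma filterlim_at_left_continuous (f : R -> R) x :
  continuous f x -> filterlim f (at_left x) (locally (f x)).
Proof. apply filterlim_filter_le_1, filter_le_within. Qed.

Lemma filterlim_Rpower_at_right_0 a :
  0 < a -> filterlim (fun t => Rpower t a) (at_right 0) (locally 0).
Proof.
  intros Ha. apply (filterlim_comp _ _ _ (fun t => a * ln t) exp _ (Rbar_locally m_infty)).
  - eapply filterlim_comp; [exact is_lim_ln_0|].
    pose proof (filterlim_Rbar_mult_l a m_infty) as H.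
    rewrite (is_Rbar_mult_unique _ _ _
               (is_Rbar_mult_sym _ _ _ (is_Rbar_mult_m_infty_pos a Ha))) in H.
    exact H.
  - exact is_lim_exp_m.
Qed.

Lemma filterlim_Rpower_p_infty a :
  a < 0 -> filterlim (fun t => Rpower t a) (Rbar_locally p_infty) (locally 0).
Proof.
  intros Ha. apply (filterlim_comp _ _ _ (fun t => a * ln t) exp _ (Rbar_locally m_infty)).
  - eapply filterlim_comp; [exact is_lim_ln_p|].
    pose proof (filterlim_Rbar_mult_l a p_infty) as H.
    rewrite (is_Rbar_mult_unique _ _ _
               (is_Rbar_mult_sym _ _ _ (is_Rbar_mult_p_infty_neg a Ha))) in H.
    exact H.
  - exact is_lim_exp_m.
Qed.

Definition is_interval (D : R -> Prop) :=
  forall x y z, D x -> D y -> x <= z <= y -> D z.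

Lemma is_interval_open a b : is_interval (fun x => a < x < b).
Proof. intros x y z Hx Hy Hz. lra. Qed.

Lemma is_interval_gt a : is_interval (fun x => a < x).
Proof. intros x y z Hx Hy Hz. lra. Qed.

Lemma is_interval_between D x y z :
  is_interval D -> D x -> D y -> Rmin x y <= z <= Rmax x y -> D z.
Proof.
  intros HD Hx Hy Hz. unfold Rmin, Rmax in Hz.
  destruct (Rle_dec x y); [apply (HD x y) | apply (HD y x)]; auto.
Qed.

Lemma is_RInt_gen_filterlim_RInt {Fa Fb : (R -> Prop) -> Prop} {FFa : Filter Fa}
  {FFb : Filter Fb} (f : R -> R) l :
  is_RInt_gen f Fa Fb l ->
  filterlim (fun ab => RInt f (fst ab) (snd ab)) (filter_prod Fa Fb) (locally l).
Proof.
  intros Hf. apply filterlim_locally. intros eps.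
  generalize (proj1 (filterlimi_locally _ _) Hf eps). apply filter_imp.
  intros ab [y [Hy Hball]]. now rewrite (is_RInt_unique _ _ _ _ Hy).
Qed.

Section ImproperIntegralOnInterval.
Context {Fa Fb : (R -> Prop) -> Prop} {FFa : ProperFilter Fa} {FFb : ProperFilter Fb}.
Variable D : R -> Prop.
Hypothesis D_interval : is_interval D.
Hypothesis Fa_D : Fa D.
Hypothesis Fb_D : Fb D.

Lemma filter_prod_interval : filter_prod Fa Fb (fun ab => D (fst ab) /\ D (snd ab)).
Proof. exact (Filter_prod _ _ _ D D Fa_D Fb_D (fun a b Ha Hb => conj Ha Hb)). Qed.

Lemma ex_RInt_on (f : R -> R) a b :
  (forall x, D x -> continuous f x) -> D a -> D b -> ex_RInt f a b.
Proof.
  intros Hf Ha Hb. apply (ex_RInt_continuous (V := R_CompleteNormedModule)).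
  intros x Hx. apply Hf, (is_interval_between D a b); assumption.
Qed.

Lemma is_RInt_primitive_on (F f : R -> R) a b :
  (forall x, D x -> is_derive F x (f x)) -> (forall x, D x -> continuous f x) ->
  D a -> D b -> is_RInt f a b (F b - F a).
Proof.
  intros HF Hf Ha Hb.
  apply (is_RInt_derive F f); intros x Hx; [apply HF | apply Hf];
    exact (is_interval_between D a b x D_interval Ha Hb Hx).
Qed.

Lemma is_RInt_gen_primitive (F f : R -> R) la lb :
  (forall x, D x -> is_derive F x (f x)) -> (forall x, D x -> continuous f x) ->
  filterlim F Fa (locally la) -> filterlim F Fb (locally lb) ->
  is_RInt_gen f Fa Fb (lb - la).
Proof.
  intros HF Hf Hla Hlb.
  apply filterlimi_lim_ext_loc with (f := fun ab => F (snd ab) - F (fst ab)).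
  - generalize filter_prod_interval. apply filter_imp. intros [a b] [Ha Hb].
    exact (is_RInt_primitive_on F f a b HF Hf Ha Hb).
  - apply filterlim_Rminus.
    + exact (filterlim_comp _ _ _ snd F _ _ _ filterlim_snd Hlb).
    + exact (filterlim_comp _ _ _ fst F _ _ _ filterlim_fst Hla).
Qed.

Lemma abs_RInt_le_primitive (f g G : R -> R) a b :
  (forall x, D x -> continuous f x) -> (forall x, D x -> Rabs (f x) <= g x) ->
  (forall x, D x -> is_derive G x (g x)) -> (forall x, D x -> continuous g x) ->
  D a -> D b -> Rabs (RInt f a b) <= Rabs (G b - G a).
Proof.
  intros Hf Hfg HG Hg.
  assert (Hle : forall a b, D a -> D b -> a <= b -> Rabs (RInt f a b) <= G b - G a).
  { intros x y Hx Hy Hxy.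
    apply (norm_RInt_le f g x y);
      [exact Hxy | | | exact (is_RInt_primitive_on G g x y HG Hg Hx Hy)].
    - intros z Hz. apply Hfg, (D_interval x y); assumption.
    - apply (RInt_correct (V := R_CompleteNormedModule)), ex_RInt_on; assumption. }
  intros Ha Hb. destruct (Rle_dec a b) as [Hab | Hab].
  - eapply Rle_trans; [apply Hle; auto | apply Rle_abs].
  - rewrite <- opp_RInt_swap.
    + change (Rabs (- RInt f b a) <= Rabs (G b - G a)).
      rewrite Rabs_Ropp, Rabs_minus_sym.
      eapply Rle_trans; [apply Hle; auto; lra | apply Rle_abs].
    + apply ex_RInt_on; assumption.
Qed.

Lemma abs_RInt_sub_le_primitive (f g G : R -> R) a b a' b' :
  (forall x, D x -> continuous f x) -> (forall x, D x -> Rabs (f x) <= g x) ->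
  (forall x, D x -> is_derive G x (g x)) -> (forall x, D x -> continuous g x) ->
  D a -> D b -> D a' -> D b' ->
  Rabs (RInt f a' b' - RInt f a b) <= Rabs (G a' - G a) + Rabs (G b - G b').
Proof.
  intros Hf Hfg HG Hg Ha Hb Ha' Hb'.
  assert (Hchasles : RInt f a' b' - RInt f a b = - (RInt f a a' + RInt f b' b)).
  { rewrite <- (RInt_Chasles f a a' b), <- (RInt_Chasles f a' b' b)
      by (apply ex_RInt_on; assumption).
    change (RInt f a' b' - (RInt f a a' + (RInt f a' b' + RInt f b' b))
            = - (RInt f a a' + RInt f b' b)). ring. }
  rewrite Hchasles, Rabs_Ropp.
  eapply Rle_trans; [apply Rabs_triang | apply Rplus_le_compat];
    apply (abs_RInt_le_primitive f g G); assumption.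
Qed.

Lemma ex_RInt_gen_majorant (f g G : R -> R) la lb :
  (forall x, D x -> continuous f x) -> (forall x, D x -> Rabs (f x) <= g x) ->
  (forall x, D x -> is_derive G x (g x)) -> (forall x, D x -> continuous g x) ->
  filterlim G Fa (locally la) -> filterlim G Fb (locally lb) ->
  ex_RInt_gen f Fa Fb.
Proof.
  intros Hf Hfg HG Hg Hla Hlb.
  assert (Hcauchy : exists l, filterlim (fun ab => RInt f (fst ab) (snd ab))
                               (filter_prod Fa Fb) (locally l)).
  { apply (filterlim_locally_cauchy (FF := filter_prod_proper)). intros eps.
    assert (He : 0 < eps / 4) by (pose proof (cond_pos eps); lra).
    set (P a := D a /\ Rabs (G a - la) < eps / 4).
    set (Q b := D b /\ Rabs (G b - lb) < eps / 4).
    exists (fun ab => P (fst ab) /\ Q (snd ab)). split.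
    - apply (Filter_prod _ _ _ P Q); [ | | now intros].
      + apply filter_and; [exact Fa_D | exact (proj1 (filterlim_locally _ _) Hla (mkposreal _ He))].
      + apply filter_and; [exact Fb_D | exact (proj1 (filterlim_locally _ _) Hlb (mkposreal _ He))].
    - intros [a b] [a' b'] [[Ha Ga] [Hb Gb]] [[Ha' Ga'] [Hb' Gb']]. simpl in *.
      change (Rabs (RInt f a' b' - RInt f a b) < eps).
      eapply Rle_lt_trans; [apply (abs_RInt_sub_le_primitive f g G); assumption|].
      assert (Rabs (G a' - G a) < eps / 2).
      { replace (G a' - G a) with ((G a' - la) - (G a - la)) by ring.
        eapply Rle_lt_trans; [apply Rabs_triang|]. rewrite Rabs_Ropp. lra. }
      assert (Rabs (G b - G b') < eps / 2).
      { replace (G b - G b') with ((G b - lb) - (G b' - lb)) by ring.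
        eapply Rle_lt_trans; [apply Rabs_triang|]. rewrite Rabs_Ropp. lra. }
      lra. }
  destruct Hcauchy as [l Hl]. exists l.
  apply (filterlimi_lim_ext_loc (fun ab => RInt f (fst ab) (snd ab))); [|exact Hl].
  generalize filter_prod_interval. apply filter_imp. intros [a b] [Ha Hb].
  apply (RInt_correct (V := R_CompleteNormedModule)), ex_RInt_on; assumption.
Qed.

Lemma is_RInt_gen_comp {Ga Gb : (R -> Prop) -> Prop} {FGa : Filter Ga} {FGb : Filter Gb}
  (f phi dphi : R -> R) l :
  (forall x, D x -> is_derive phi x (dphi x)) -> (forall x, D x -> continuous dphi x) ->
  (forall x, D x -> continuous f (phi x)) ->
  filterlim phi Fa Ga -> filterlim phi Fb Gb -> is_RInt_gen f Ga Gb l ->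
  is_RInt_gen (fun t => dphi t * f (phi t)) Fa Fb l.
Proof.
  intros Hphi Hdphi Hf Ha Hb Hl.
  apply filterlimi_lim_ext_loc with (f := fun ab => RInt f (phi (fst ab)) (phi (snd ab))).
  - generalize filter_prod_interval. apply filter_imp. intros [a b] [Ha' Hb']. simpl in *.
    apply (is_RInt_comp (V := R_CompleteNormedModule)); intros x Hx;
      pose proof (is_interval_between D a b x D_interval Ha' Hb' Hx); auto.
  - apply (filterlim_comp _ _ _ (fun ab => (phi (fst ab), phi (snd ab)))
             (fun xy => RInt f (fst xy) (snd xy)) _ (filter_prod Ga Gb)).
    + apply filterlim_pair.
      * exact (filterlim_comp _ _ _ fst phi _ _ _ filterlim_fst Ha).
      * exact (filterlim_comp _ _ _ snd phi _ _ _ filterlim_snd Hb).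
    + exact (is_RInt_gen_filterlim_RInt f l Hl).
Qed.

End ImproperIntegralOnInterval.

Lemma at_right_open_interval a b : a < b -> at_right a (fun x => a < x < b).
Proof.
  intros Hab. exists (mkposreal (b - a) ltac:(lra)). intros x Hx Hax.
  change (Rabs (x - a) < b - a) in Hx. apply Rabs_def2 in Hx. lra.
Qed.

Lemma at_left_open_interval a b : a < b -> at_left b (fun x => a < x < b).
Proof.
  intros Hab. exists (mkposreal (b - a) ltac:(lra)). intros x Hx Hxb.
  change (Rabs (x - b) < b - a) in Hx. apply Rabs_def2 in Hx. lra.
Qed.

Lemma filterlim_one_minus_at_left : filterlim (fun u => 1 - u) (at_left 1) (at_right 0).
Proof.
  intros P [eps HP]. exists eps. intros u Hu Hu1. apply HP; [|lra].
  change (Rabs (1 - u - 0) < eps). change (Rabs (u - 1) < eps) in Hu.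
  rewrite Rminus_0_r, Rabs_minus_sym. exact Hu.
Qed.

Lemma Rpower_minus_1 x a : 0 < x -> Rpower x (a - 1) = Rpower x a / x.
Proof.
  intros Hx. unfold Rminus. rewrite Rpower_plus, Rpower_Ropp, Rpower_1 by lra. reflexivity.
Qed.

Lemma exp_le_compat x y : x <= y -> exp x <= exp y.
Proof.
  intros [Hxy | ->]; [left; apply exp_increasing, Hxy | right; reflexivity].
Qed.

Lemma Rpower_le_2_Rabs v c : / 2 <= v <= 1 -> Rpower v c <= Rpower 2 (Rabs c).
Proof.
  intros Hv. unfold Rpower.
  assert (Hln : - ln 2 <= ln v <= 0).
  { rewrite <- ln_1, <- ln_Rinv by lra. split; apply ln_le; lra. }
  apply exp_le_compat.
  apply Rle_trans with (Rabs c * Rabs (ln v)).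
  - rewrite <- Rabs_mult. apply Rle_abs.
  - apply Rmult_le_compat_l; [apply Rabs_pos|]. apply Rabs_le. lra.
Qed.

Definition beta_integrand (z w u : R) := Rpower (1 - u) (z - 1) * Rpower u (w - 1).

Lemma continuous_beta_integrand z w u : 0 < u < 1 -> continuous (beta_integrand z w) u.
Proof.
  intros Hu. apply ex_derive_continuous_R. unfold beta_integrand, Rpower. auto_derive. lra.
Qed.

Section BetaConvergence.
Variables z w : R.
Hypothesis z_pos : 0 < z.
Hypothesis w_pos : 0 < w.

Let M := Rpower 2 (Rabs (z - 1)) + Rpower 2 (Rabs (w - 1)).

Let beta_majorant (u : R) := M * (Rpower u (w - 1) + Rpower (1 - u) (z - 1)).

Let beta_majorant_primitive (u : R) := M * (Rpower u w / w - Rpower (1 - u) z / z).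

Lemma beta_integrand_le_majorant u :
  0 < u < 1 -> Rabs (beta_integrand z w u) <= beta_majorant u.
Proof.
  intros Hu. unfold beta_integrand, beta_majorant, M.
  pose proof (exp_pos ((z - 1) * ln (1 - u))) as Hz'.
  pose proof (exp_pos ((w - 1) * ln u)) as Hw'.
  pose proof (exp_pos (Rabs (z - 1) * ln 2)) as H2z.
  pose proof (exp_pos (Rabs (w - 1) * ln 2)) as H2w.
  fold (Rpower (1 - u) (z - 1)) (Rpower u (w - 1)) (Rpower 2 (Rabs (z - 1)))
    (Rpower 2 (Rabs (w - 1))) in *.
  rewrite Rabs_pos_eq by nra.
  destruct (Rle_lt_dec u (/ 2)).
  - pose proof (Rpower_le_2_Rabs (1 - u) (z - 1) ltac:(lra)). nra.
  - pose proof (Rpower_le_2_Rabs u (w - 1) ltac:(lra)). nra.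
Qed.

Lemma is_derive_beta_majorant_primitive u :
  0 < u < 1 -> is_derive beta_majorant_primitive u (beta_majorant u).
Proof.
  intros Hu. unfold beta_majorant_primitive, beta_majorant, Rpower.
  auto_derive; [lra|].
  replace (1 + - u) with (1 - u) by ring.
  fold (Rpower u w) (Rpower (1 - u) z) (Rpower u (w - 1)) (Rpower (1 - u) (z - 1)).
  rewrite !Rpower_minus_1 by lra. field. lra.
Qed.

Lemma continuous_beta_majorant u : 0 < u < 1 -> continuous beta_majorant u.
Proof.
  intros Hu. apply ex_derive_continuous_R. unfold beta_majorant, Rpower. auto_derive. lra.
Qed.

Lemma filterlim_beta_majorant_primitive_0 :
  filterlim beta_majorant_primitive (at_right 0) (locally (M * (0 / w - Rpower (1 - 0) z / z))).
Proof.
  apply filterlim_Rmult; [apply filterlim_const|].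
  apply filterlim_Rminus; apply filterlim_Rmult; try apply filterlim_const.
  - exact (filterlim_Rpower_at_right_0 w w_pos).
  - apply (filterlim_at_right_continuous (fun u => Rpower (1 - u) z)).
    apply ex_derive_continuous_R. unfold Rpower. auto_derive. lra.
Qed.

Lemma filterlim_beta_majorant_primitive_1 :
  filterlim beta_majorant_primitive (at_left 1) (locally (M * (Rpower 1 w / w - 0 / z))).
Proof.
  apply filterlim_Rmult; [apply filterlim_const|].
  apply filterlim_Rminus; apply filterlim_Rmult; try apply filterlim_const.
  - apply (filterlim_at_left_continuous (fun u => Rpower u w)).
    apply ex_derive_continuous_R. unfold Rpower. auto_derive. lra.
  - exact (filterlim_comp _ _ _ _ _ _ _ _ filterlim_one_minus_at_left
             (filterlim_Rpower_at_right_0 z z_pos)).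
Qed.

Lemma ex_RInt_gen_beta_integrand :
  ex_RInt_gen (beta_integrand z w) (at_right 0) (at_left 1).
Proof.
  exact (ex_RInt_gen_majorant _ (is_interval_open 0 1) (at_right_open_interval 0 1 Rlt_0_1)
           (at_left_open_interval 0 1 Rlt_0_1) _ _ _ _ _
           (continuous_beta_integrand z w) beta_integrand_le_majorant
           is_derive_beta_majorant_primitive continuous_beta_majorant
           filterlim_beta_majorant_primitive_0 filterlim_beta_majorant_primitive_1).
Qed.

End BetaConvergence.

Lemma is_RInt_gen_Beta z w :
  0 < z -> 0 < w -> is_RInt_gen (beta_integrand z w) (at_right 0) (at_left 1) (Beta z w).
Proof.
  intros Hz Hw. exact (RInt_gen_correct _ (ex_RInt_gen_beta_integrand z w Hz Hw)).
Qed.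

Lemma Beta_1_half : Beta 1 (/ 2) = 2.
Proof.
  apply (is_RInt_gen_unique (Fa := at_right 0) (Fb := at_left 1)).
  enough (H : is_RInt_gen (beta_integrand 1 (/ 2)) (at_right 0) (at_left 1)
                (2 * sqrt 1 - 2 * sqrt 0))
    by (rewrite sqrt_1, sqrt_0, Rmult_0_r, Rmult_1_r, Rminus_0_r in H; exact H).
  apply (is_RInt_gen_primitive _ (is_interval_open 0 1) (at_right_open_interval 0 1 Rlt_0_1)
           (at_left_open_interval 0 1 Rlt_0_1) (fun u => 2 * sqrt u)).
  - intros u Hu. auto_derive; [lra|].
    unfold beta_integrand. rewrite Rminus_diag, Rpower_O, Rpower_minus_1, Rpower_sqrt by lra.
    pose proof (sqrt_lt_R0 u (proj1 Hu)).
    rewrite <- (sqrt_sqrt u) at 3 by lra. field. lra.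
  - apply continuous_beta_integrand.
  - apply filterlim_Rmult; [apply filterlim_const|].
    apply filterlim_at_right_continuous, continuous_sqrt.
  - apply filterlim_Rmult; [apply filterlim_const|].
    apply filterlim_at_left_continuous, continuous_sqrt.
Qed.

Lemma filterlim_locally_within {T} {F : (T -> Prop) -> Prop} {FF : Filter F}
  (f : T -> R) l (D : R -> Prop) :
  filterlim f F (locally l) -> F (fun x => D (f x)) -> filterlim f F (within D (locally l)).
Proof.
  intros Hl HD P HP. generalize (filter_and _ _ (Hl _ HP) HD). apply filter_imp.
  intros x [H1 H2]. exact (H1 H2).
Qed.

Lemma at_right_gt a : at_right a (fun x => a < x).
Proof. exists (mkposreal 1 Rlt_0_1). intros x _ Hx. exact Hx. Qed.

Lemma Rbar_locally_p_infty_gt a : Rbar_locally p_infty (fun x => a < x).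
Proof. exists a. intros x Hx. exact Hx. Qed.

Lemma one_plus_pow_pos m t : 0 < t -> 0 < 1 + t ^ m.
Proof. intros Ht. pose proof (pow_lt t m Ht). lra. Qed.

Lemma Rle_1_plus_pow t m : (1 <= m)%nat -> 0 < t -> t <= 1 + t ^ m.
Proof.
  intros Hm Ht. pose proof (pow_lt t m Ht). destruct (Rle_lt_dec 1 t) as [H1 | H1].
  - pose proof (Rle_pow t 1 m H1 Hm). simpl in *. lra.
  - lra.
Qed.

Section BetaHalfLine.
Variable m : nat.
Hypothesis m_pos : (1 <= m)%nat.

Let inv_1_plus_pow (t : R) := / (1 + t ^ m).
Let inv_1_plus_pow' (t : R) := - (INR m * t ^ Init.Nat.pred m) / (1 + t ^ m) ^ 2.

Lemma inv_1_plus_pow_in_01 t : 0 < t -> 0 < inv_1_plus_pow t < 1.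
Proof.
  intros Ht. pose proof (pow_lt t m Ht). unfold inv_1_plus_pow. split.
  - apply Rinv_0_lt_compat. lra.
  - rewrite <- Rinv_1. apply Rinv_lt_contravar; lra.
Qed.

Lemma is_derive_inv_1_plus_pow t : 0 < t -> is_derive inv_1_plus_pow t (inv_1_plus_pow' t).
Proof.
  intros Ht. pose proof (one_plus_pow_pos m t Ht). unfold inv_1_plus_pow, inv_1_plus_pow'.
  auto_derive; [lra|]. field. lra.
Qed.

Lemma continuous_inv_1_plus_pow' t : 0 < t -> continuous inv_1_plus_pow' t.
Proof.
  intros Ht. pose proof (one_plus_pow_pos m t Ht).
  apply ex_derive_continuous_R. unfold inv_1_plus_pow'. auto_derive. nra.
Qed.

Lemma filterlim_inv_1_plus_pow_0 : filterlim inv_1_plus_pow (at_right 0) (at_left 1).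
Proof.
  apply filterlim_locally_within.
  - replace 1 with (inv_1_plus_pow 0) by (unfold inv_1_plus_pow; rewrite pow_i by lia; field).
    apply filterlim_at_right_continuous, ex_derive_continuous_R.
    unfold inv_1_plus_pow. auto_derive. rewrite pow_i by lia. lra.
  - generalize (at_right_gt 0). apply filter_imp. intros t Ht. apply inv_1_plus_pow_in_01, Ht.
Qed.

Lemma filterlim_inv_1_plus_pow_p_infty :
  filterlim inv_1_plus_pow (Rbar_locally p_infty) (at_right 0).
Proof.
  apply filterlim_locally_within.
  - apply (filterlim_Rabs_le_0 _ Rinv).
    + generalize (Rbar_locally_p_infty_gt 0). apply filter_imp. intros t Ht.
      pose proof (inv_1_plus_pow_in_01 t Ht). rewrite Rabs_pos_eq by lra.
      apply Rinv_le_contravar; [exact Ht | apply Rle_1_plus_pow; assumption].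
    + exact (filterlim_Rbar_inv p_infty ltac:(discriminate)).
  - generalize (Rbar_locally_p_infty_gt 0). apply filter_imp. intros t Ht.
    apply inv_1_plus_pow_in_01, Ht.
Qed.

Lemma beta_integrand_inv_1_plus_pow z w t : 0 < t ->
  - (inv_1_plus_pow' t * beta_integrand z w (inv_1_plus_pow t))
  = INR m * Rpower t (INR m * z - 1) * Rpower (1 + t ^ m) (- (z + w)).
Proof.
  intros Ht. pose proof (one_plus_pow_pos m t Ht) as Hs. pose proof (pow_lt t m Ht).
  assert (Hln1 : ln (1 - inv_1_plus_pow t) = INR m * ln t - ln (1 + t ^ m)).
  { unfold inv_1_plus_pow. replace (1 - / (1 + t ^ m)) with (t ^ m / (1 + t ^ m)) by (field; lra).
    rewrite ln_div, ln_pow by lra. reflexivity. }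
  assert (Hln2 : ln (inv_1_plus_pow t) = - ln (1 + t ^ m)) by (apply ln_Rinv; lra).
  assert (Hpred : t ^ Init.Nat.pred m = exp ((INR m - 1) * ln t)).
  { rewrite <- (exp_ln (t ^ Init.Nat.pred m)), ln_pow by (try apply pow_lt; lra).
    rewrite <- (Nat.succ_pred_pos m) at 2 by lia. rewrite S_INR. f_equal. ring. }
  assert (Hsq : / (1 + t ^ m) ^ 2 = exp (- (2 * ln (1 + t ^ m)))).
  { rewrite exp_Ropp. replace (2 * ln (1 + t ^ m)) with (ln (1 + t ^ m) + ln (1 + t ^ m)) by ring.
    rewrite exp_plus, exp_ln by lra. f_equal. ring. }
  unfold beta_integrand, inv_1_plus_pow', Rpower, Rdiv. rewrite Hln1, Hln2, Hpred, Hsq.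
  transitivity (INR m * exp ((INR m - 1) * ln t + - (2 * ln (1 + t ^ m))
     + (z - 1) * (INR m * ln t - ln (1 + t ^ m)) + (w - 1) * - ln (1 + t ^ m))).
  - rewrite !exp_plus. ring.
  - rewrite Rmult_assoc, <- exp_plus. f_equal. f_equal. ring.
Qed.

Lemma is_RInt_gen_Beta_half_line z w : 0 < z -> 0 < w ->
  is_RInt_gen (fun t => INR m * Rpower t (INR m * z - 1) * Rpower (1 + t ^ m) (- (z + w)))
    (at_right 0) (Rbar_locally p_infty) (Beta z w).
Proof.
  intros Hz Hw.
  pose proof (is_RInt_gen_swap _ _ (is_RInt_gen_Beta z w Hz Hw)) as Hswap.
  pose proof (is_RInt_gen_comp _ (is_interval_gt 0) (at_right_gt 0) (Rbar_locally_p_infty_gt 0)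
      _ _ _ _ is_derive_inv_1_plus_pow continuous_inv_1_plus_pow'
      (fun t Ht => continuous_beta_integrand z w _ (inv_1_plus_pow_in_01 t Ht))
      filterlim_inv_1_plus_pow_0 filterlim_inv_1_plus_pow_p_infty Hswap) as Hcomp.
  pose proof (is_RInt_gen_opp _ _ Hcomp) as H.
  rewrite opp_opp in H. revert H. apply is_RInt_gen_ext.
  generalize (filter_prod_interval _ (at_right_gt 0) (Rbar_locally_p_infty_gt 0)).
  apply filter_imp. intros [a b] [Ha Hb] t Ht. simpl in *.
  apply beta_integrand_inv_1_plus_pow. apply Rlt_trans with (Rmin a b); [apply Rmin_glb_lt|]; tauto.
Qed.

End BetaHalfLine.

Lemma Rpower_one_plus_opp_bound u c :
  0 <= u -> 0 <= c -> 0 <= 1 - Rpower (1 + u) (- c) <= c * u.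
Proof.
  intros Hu Hc. unfold Rpower.
  assert (HL : 0 <= ln (1 + u) <= u).
  { split.
    - rewrite <- ln_1. apply ln_le; lra.
    - rewrite <- (ln_exp u) at 2. apply ln_le; [lra | apply exp_ineq1_le]. }
  pose proof (exp_ineq1_le (- c * ln (1 + u))).
  assert (exp (- c * ln (1 + u)) <= exp 0) by (apply exp_le_compat; nra).
  rewrite exp_0 in *. nra.
Qed.

Section PowerRatioIntegral.
Variable m : nat.
Variables a b c : R.
Hypothesis m_pos : (1 <= m)%nat.
Hypothesis c_pos : 0 < c.
Hypothesis b_def : b = a - INR m * c.
Hypothesis b_gt : -1 < b.
Hypothesis b_lt : b < INR m - 1.

Let p := b + 1.

Definition power_ratio_sub_power (t : R) := Rpower t a / Rpower (1 + t ^ m) c - Rpower t b.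

Let power_ratio_primitive (t : R) := (Rpower t (a + 1) * Rpower (1 + t ^ m) (- c) - Rpower t p) / p.

Let beta_kernel (t : R) := INR m * Rpower t a * Rpower (1 + t ^ m) (- (c + 1)).

Lemma is_derive_power_ratio_primitive t :
  0 < t -> is_derive power_ratio_primitive t (power_ratio_sub_power t + c / p * beta_kernel t).
Proof.
  intros Ht. pose proof (one_plus_pow_pos m t Ht) as Hs.
  unfold power_ratio_primitive, power_ratio_sub_power, beta_kernel, Rpower.
  auto_derive; [repeat split; lra|].
  fold (Rpower t (a + 1)) (Rpower t a) (Rpower t p) (Rpower t b).
  fold (Rpower (1 + t ^ m) (- c)) (Rpower (1 + t ^ m) c) (Rpower (1 + t ^ m) (- (c + 1))).
  replace (t ^ Init.Nat.pred m) with (t ^ m / t)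
    by (rewrite <- (Nat.succ_pred_pos m) at 1 by lia; simpl; field; lra).
  replace (- (c + 1)) with (- c + - (1)) by ring. unfold p.
  rewrite !Rpower_plus, !Rpower_Ropp, !Rpower_1 by lra.
  pose proof (exp_pos (c * ln (1 + t ^ m))). fold (Rpower (1 + t ^ m) c) in *.
  subst b. field. repeat split; lra.
Qed.

Lemma continuous_power_ratio_integrand t :
  0 < t -> continuous (fun t => power_ratio_sub_power t + c / p * beta_kernel t) t.
Proof.
  intros Ht. pose proof (one_plus_pow_pos m t Ht).
  apply ex_derive_continuous_R. unfold power_ratio_sub_power, beta_kernel, Rpower.
  auto_derive. repeat split; try lra; apply Rgt_not_eq, exp_pos.
Qed.

Lemma filterlim_power_ratio_primitive_0 : filterlim power_ratio_primitive (at_right 0) (locally 0).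
Proof.
  replace 0 with ((0 * Rpower (1 + 0 ^ m) (- c) - 0) / p) at 2 by (field; unfold p; lra).
  apply filterlim_Rmult; [|apply filterlim_const].
  apply filterlim_Rminus; [apply filterlim_Rmult|].
  - apply filterlim_Rpower_at_right_0. subst b. pose proof (pos_INR m). nra.
  - apply (filterlim_at_right_continuous (fun t => Rpower (1 + t ^ m) (- c))).
    apply ex_derive_continuous_R. unfold Rpower. auto_derive.
    rewrite pow_i by lia. lra.
  - apply filterlim_Rpower_at_right_0. unfold p. lra.
Qed.

Lemma power_ratio_primitive_eq t :
  0 < t -> power_ratio_primitive t = Rpower t p * (Rpower (1 + / t ^ m) (- c) - 1) / p.
Proof.
  intros Ht. pose proof (pow_lt t m Ht).
  assert (Hsplit : ln (1 + t ^ m) = INR m * ln t + ln (1 + / t ^ m)).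
  { rewrite <- ln_pow, <- ln_mult by (try apply Rplus_lt_0_compat; try apply Rinv_0_lt_compat; lra).
    f_equal. field. lra. }
  unfold power_ratio_primitive, Rpower. rewrite Hsplit, <- exp_plus.
  replace ((a + 1) * ln t + - c * (INR m * ln t + ln (1 + / t ^ m)))
    with (p * ln t + - c * ln (1 + / t ^ m)) by (unfold p; subst b; ring).
  rewrite exp_plus. field. unfold p. lra.
Qed.

Lemma Rabs_power_ratio_primitive_le t :
  0 < t -> Rabs (power_ratio_primitive t) <= c / p * Rpower t (p - INR m).
Proof.
  intros Ht. pose proof (pow_lt t m Ht).
  assert (Hp : 0 < p) by (unfold p; lra).
  pose proof (Rpower_one_plus_opp_bound (/ t ^ m) c ltac:(left; apply Rinv_0_lt_compat; lra)
                ltac:(lra)) as [H0 H1].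
  pose proof (exp_pos (p * ln t)). fold (Rpower t p) in *.
  rewrite power_ratio_primitive_eq by exact Ht.
  replace (p - INR m) with (p + - INR m) by ring.
  rewrite (Rpower_plus p), (Rpower_Ropp t), Rpower_pow by lra.
  set (R := Rpower (1 + / t ^ m) (- c)) in *.
  replace (Rpower t p * (R - 1) / p) with (Rpower t p * (1 - R) / p * -1) by (field; lra).
  rewrite Rabs_mult, Rabs_m1, Rmult_1_r, Rabs_pos_eq.
  - apply Rle_trans with (Rpower t p * (c * / t ^ m) / p).
    + apply Rmult_le_compat_r; [left; apply Rinv_0_lt_compat; exact Hp|].
      apply Rmult_le_compat_l; lra.
    + right. field. lra.
  - apply Rdiv_le_0_compat; [apply Rmult_le_pos|]; lra.
Qed.

Lemma filterlim_power_ratio_primitive_p_infty :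
  filterlim power_ratio_primitive (Rbar_locally p_infty) (locally 0).
Proof.
  apply (filterlim_Rabs_le_0 _ (fun t => c / p * Rpower t (p - INR m))).
  - generalize (Rbar_locally_p_infty_gt 0). apply filter_imp. exact Rabs_power_ratio_primitive_le.
  - rewrite <- (Rmult_0_r (c / p)). apply filterlim_Rmult; [apply filterlim_const|].
    apply filterlim_Rpower_p_infty. unfold p. lra.
Qed.

Lemma is_RInt_gen_power_ratio_sub_power :
  is_RInt_gen power_ratio_sub_power (at_right 0) (Rbar_locally p_infty)
    (- (c / (b + 1) * Beta ((a + 1) / INR m) (c + 1 - (a + 1) / INR m))).
Proof.
  assert (Hm : 0 < INR m) by (apply lt_0_INR; lia).
  assert (Hz : 0 < (a + 1) / INR m) by (apply Rdiv_lt_0_compat; [subst b; nra | exact Hm]).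
  assert (Hw : 0 < c + 1 - (a + 1) / INR m).
  { apply Rlt_0_minus, (Rmult_lt_reg_r (INR m)); [exact Hm|].
    unfold Rdiv. rewrite Rmult_assoc, Rinv_l by lra. subst b. nra. }
  pose proof (is_RInt_gen_Beta_half_line m m_pos _ _ Hz Hw) as HB.
  replace (INR m * ((a + 1) / INR m) - 1) with a in HB by (field; lra).
  replace ((a + 1) / INR m + (c + 1 - (a + 1) / INR m)) with (c + 1) in HB by ring.
  pose proof (is_RInt_gen_primitive _ (is_interval_gt 0) (at_right_gt 0)
      (Rbar_locally_p_infty_gt 0) _ _ _ _ is_derive_power_ratio_primitive
      continuous_power_ratio_integrand filterlim_power_ratio_primitive_0
      filterlim_power_ratio_primitive_p_infty) as HP.
  pose proof (is_RInt_gen_minus _ _ _ _ HP (is_RInt_gen_scal _ (c / p) _ HB)) as H.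
  assert (Hval : 0 - 0 - c / p * Beta ((a + 1) / INR m) (c + 1 - (a + 1) / INR m)
                 = - (c / (b + 1) * Beta ((a + 1) / INR m) (c + 1 - (a + 1) / INR m)))
    by (unfold p; ring).
  rewrite <- Hval.
  revert H. apply is_RInt_gen_ext, filter_forall. intros ab t _.
  change (power_ratio_sub_power t + c / p * beta_kernel t - c / p * beta_kernel t
          = power_ratio_sub_power t). ring.
Qed.

End PowerRatioIntegral.

Definition arsinh (x : R) := ln (x + sqrt (1 + x ^ 2)).

Lemma sqrt_1_plus_sq_pos x : 0 < sqrt (1 + x ^ 2).
Proof. apply sqrt_lt_R0. pose proof (pow2_ge_0 x). lra. Qed.

Lemma sqrt_1_plus_sq_sq x : sqrt (1 + x ^ 2) ^ 2 = 1 + x ^ 2.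
Proof. apply pow2_sqrt. pose proof (pow2_ge_0 x). lra. Qed.

Lemma arsinh_arg_pos x : 0 < x + sqrt (1 + x ^ 2).
Proof.
  pose proof (sqrt_1_plus_sq_pos x). pose proof (sqrt_1_plus_sq_sq x). nra.
Qed.

Lemma is_derive_arsinh x : is_derive arsinh x (/ sqrt (1 + x ^ 2)).
Proof.
  pose proof (sqrt_1_plus_sq_pos x). pose proof (sqrt_1_plus_sq_sq x).
  pose proof (arsinh_arg_pos x). unfold arsinh.
  auto_derive; replace (x * (x * 1)) with (x ^ 2) by ring.
  - pose proof (pow2_ge_0 x). repeat split; lra.
  - field. lra.
Qed.

Lemma is_derive_div_sqrt_1_plus_sq x :
  is_derive (fun x => x / sqrt (1 + x ^ 2)) x (/ sqrt (1 + x ^ 2) ^ 3).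
Proof.
  pose proof (sqrt_1_plus_sq_pos x). pose proof (sqrt_1_plus_sq_sq x).
  auto_derive; replace (x * (x * 1)) with (x ^ 2) by ring.
  - pose proof (pow2_ge_0 x). repeat split; lra.
  - transitivity ((sqrt (1 + x ^ 2) ^ 2 - x ^ 2) / sqrt (1 + x ^ 2) ^ 3); [field; lra|].
    rewrite H0. field. lra.
Qed.

Fixpoint odd_harm_poly (p : nat) (x : R) : R :=
  match p with
  | O => 0
  | S q => odd_harm_poly q x + x ^ (2 * q + 1) / INR (2 * q + 1)
  end.

Fixpoint even_pow_sum (p : nat) (x : R) : R :=
  match p with
  | O => 0
  | S q => even_pow_sum q x + x ^ (2 * q)
  end.

Lemma is_derive_odd_harm_poly p x : is_derive (odd_harm_poly p) x (even_pow_sum p x).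
Proof.
  induction p as [|p IH]; simpl.
  - apply (is_derive_const (K := R_AbsRing) (V := R_NormedModule) 0).
  - assert (Hp : 0 < INR (p + (p + 0) + 1)) by (apply lt_0_INR; lia).
    apply (is_derive_plus (K := R_AbsRing) (V := R_NormedModule) (odd_harm_poly p)); [exact IH|].
    auto_derive; [lra|].
    replace (Init.Nat.pred (p + (p + 0) + 1)) with (p + (p + 0))%nat by lia.
    field. lra.
Qed.

Lemma even_pow_sum_mul p x : even_pow_sum p x * (1 - x ^ 2) = 1 - x ^ (2 * p).
Proof.
  induction p as [|p IH]; cbn [even_pow_sum].
  - simpl. ring.
  - rewrite Rmult_plus_distr_r, IH.
    replace (2 * S p)%nat with (2 * p + 2)%nat by lia.
    rewrite (pow_add x (2 * p) 2). set (y := x ^ (2 * p)). ring.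
Qed.

Lemma odd_harm_poly_0 p : odd_harm_poly p 0 = 0.
Proof.
  induction p as [|p IH]; simpl; [reflexivity|].
  rewrite IH, pow_i by lia. unfold Rdiv. ring.
Qed.

Lemma odd_harm_poly_1 p : odd_harm_poly p 1 = odd_harm p.
Proof.
  induction p as [|p IH]; simpl; [reflexivity|].
  rewrite IH, pow1. unfold Rdiv. rewrite Rmult_1_l. reflexivity.
Qed.

Lemma is_derive_arsinh_sub_odd_harm_poly p x :
  is_derive (fun x => arsinh x - odd_harm_poly p (x / sqrt (1 + x ^ 2))) x
    (x ^ (2 * p) / sqrt (1 + x ^ 2) ^ (2 * p + 1)).
Proof.
  pose proof (sqrt_1_plus_sq_pos x) as Hs. pose proof (sqrt_1_plus_sq_sq x) as Hs2.
  pose proof (is_derive_comp (odd_harm_poly p) (fun x => x / sqrt (1 + x ^ 2)) x _ _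
                (is_derive_odd_harm_poly p _) (is_derive_div_sqrt_1_plus_sq x)) as Hcomp.
  pose proof (is_derive_minus _ _ _ _ _ (is_derive_arsinh x) Hcomp) as H.
  set (s := sqrt (1 + x ^ 2)) in *.
  assert (HX : 1 - (x / s) ^ 2 = / s ^ 2).
  { transitivity ((s ^ 2 - x ^ 2) / s ^ 2); [field; lra | rewrite Hs2 at 1; field; lra]. }
  pose proof (even_pow_sum_mul p (x / s)) as Hsum. rewrite HX in Hsum.
  unfold Rdiv in Hsum at 2. rewrite Rpow_mult_distr, pow_inv in Hsum.
  replace (x ^ (2 * p) / s ^ (2 * p + 1))
    with (/ s - / s ^ 3 * even_pow_sum p (x / s)).
  - exact H.
  - assert (Hsp : 0 < s ^ (2 * p)) by (apply pow_lt; lra).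
    replace (even_pow_sum p (x / s)) with (s ^ 2 * (1 - x ^ (2 * p) * / s ^ (2 * p)))
      by (rewrite <- Hsum; set (S := s ^ (2 * p)); field; lra).
    rewrite pow_add. set (X := x ^ (2 * p)). set (S := s ^ (2 * p)) in *. field. lra.
Qed.

Section Kint2Integral.
Variables n k : nat.
Hypothesis n_pos : (1 <= n)%nat.
Hypothesis k_pos : (1 <= k)%nat.

Definition Kint2_primitive (t : R) :=
  / INR n * (arsinh (t ^ n) - odd_harm_poly (k - 1) (t ^ n / sqrt (1 + (t ^ n) ^ 2)))
  - ln (t + 1).

Lemma is_derive_Kint2_primitive t : -1 < t ->
  is_derive Kint2_primitive t
    (t ^ (n - 1) * (t ^ n) ^ (2 * (k - 1)) / sqrt (1 + (t ^ n) ^ 2) ^ (2 * (k - 1) + 1)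
     - / (t + 1)).
Proof.
  intros Ht. pose proof (lt_0_INR n n_pos) as Hn.
  pose proof (is_derive_comp _ (fun t => t ^ n) t _ _
      (is_derive_arsinh_sub_odd_harm_poly (k - 1) (t ^ n))
      (is_derive_pow (fun t => t) n t 1 (is_derive_id t))) as Hcomp.
  pose proof (is_derive_scal _ _ (/ INR n) _ Hcomp) as Hscal.
  assert (Hln : is_derive (fun t => ln (t + 1)) t (/ (t + 1))).
  { auto_derive; [lra | field; lra]. }
  pose proof (is_derive_minus _ _ _ _ _ Hscal Hln) as H.
  unfold Kint2_primitive. rewrite (Nat.sub_1_r n).
  replace (t ^ Init.Nat.pred n * (t ^ n) ^ (2 * (k - 1))
           / sqrt (1 + (t ^ n) ^ 2) ^ (2 * (k - 1) + 1))
    with (/ INR n * (INR n * 1 * t ^ Init.Nat.pred n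
          * ((t ^ n) ^ (2 * (k - 1)) / sqrt (1 + (t ^ n) ^ 2) ^ (2 * (k - 1) + 1))))
    by (field; split; [apply pow_nonzero, Rgt_not_eq, sqrt_1_plus_sq_pos | lra]).
  exact H.
Qed.

Lemma Kint2_eq t : 0 < t ->
  Kint2 (2 * n) k t
  = t ^ (n - 1) * (t ^ n) ^ (2 * (k - 1)) / sqrt (1 + (t ^ n) ^ 2) ^ (2 * (k - 1) + 1)
    - / (t + 1).
Proof.
  intros Ht. pose proof (sqrt_1_plus_sq_pos (t ^ n)) as Hs.
  assert (Hpow : t ^ (2 * n) = (t ^ n) ^ 2) by (rewrite <- pow_mult; f_equal; lia).
  unfold Kint2. rewrite Hpow.
  replace (INR (2 * n) * INR k - INR (2 * n) / 2 - 1)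
    with (INR (n - 1 + n * (2 * (k - 1))))
    by (rewrite plus_INR, !mult_INR, !minus_INR by lia; simpl; field).
  replace (INR k - / 2) with (/ 2 * INR (2 * (k - 1) + 1))
    by (rewrite plus_INR, mult_INR, minus_INR by lia; simpl; field).
  pose proof (pow2_ge_0 (t ^ n)).
  rewrite <- Rpower_mult, Rpower_sqrt, !Rpower_pow, pow_add, pow_mult by lra.
  reflexivity.
Qed.

Lemma filterlim_Kint2_primitive_0 : filterlim Kint2_primitive (at_right 0) (locally 0).
Proof.
  replace 0 with (Kint2_primitive 0) at 2.
  - apply filterlim_at_right_continuous, ex_derive_continuous_R.
    eexists. apply is_derive_Kint2_primitive. lra.
  - unfold Kint2_primitive, arsinh.
    rewrite pow_i, Rdiv_0_l, odd_harm_poly_0, Rplus_0_l, Rplus_0_l by lia.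
    rewrite pow_i, Rplus_0_r, sqrt_1, ln_1 by lia. ring.
Qed.

Definition Kint2_primitive_at_inv (s : R) :=
  / INR n * (ln (1 + sqrt (1 + (s ^ n) ^ 2)) - odd_harm_poly (k - 1) (/ sqrt (1 + (s ^ n) ^ 2)))
  - ln (1 + s).

Lemma Kint2_primitive_inv t : 0 < t -> Kint2_primitive t = Kint2_primitive_at_inv (/ t).
Proof.
  intros Ht. pose proof (lt_0_INR n n_pos) as Hn. pose proof (pow_lt t n Ht) as Hy.
  unfold Kint2_primitive, Kint2_primitive_at_inv, arsinh. rewrite pow_inv.
  set (y := t ^ n) in *. set (r := sqrt (1 + (/ y) ^ 2)).
  assert (Hr : 0 < r) by apply sqrt_1_plus_sq_pos.
  assert (Hsqrt : sqrt (1 + y ^ 2) = y * r).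
  { unfold r. rewrite <- (sqrt_pow2 y) at 2 by lra.
    rewrite <- sqrt_mult_alt by (apply pow2_ge_0). f_equal. field. lra. }
  rewrite Hsqrt.
  replace (y + y * r) with (y * (1 + r)) by ring.
  replace (y / (y * r)) with (/ r) by (field; lra).
  replace (t + 1) with (t * (1 + / t)) by (field; lra).
  rewrite !ln_mult by (try apply Rplus_lt_0_compat; try apply Rinv_0_lt_compat; lra).
  unfold y. rewrite ln_pow by lra. field. lra.
Qed.

Lemma continuous_Kint2_primitive_at_inv_0 : continuous Kint2_primitive_at_inv 0.
Proof.
  apply ex_derive_continuous_R. unfold Kint2_primitive_at_inv.
  auto_derive; rewrite ?pow_i, ?Rmult_0_l, ?Rplus_0_r, ?sqrt_1 by lia.
  repeat split; try lra. eexists. apply is_derive_odd_harm_poly.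
Qed.

Lemma filterlim_Kint2_primitive_p_infty :
  filterlim Kint2_primitive (Rbar_locally p_infty)
    (locally (/ INR n * (ln 2 - odd_harm (k - 1)))).
Proof.
  apply (filterlim_ext_loc (fun t => Kint2_primitive_at_inv (/ t))).
  - generalize (Rbar_locally_p_infty_gt 0). apply filter_imp. intros t Ht.
    symmetry. apply Kint2_primitive_inv, Ht.
  - replace (/ INR n * (ln 2 - odd_harm (k - 1))) with (Kint2_primitive_at_inv 0).
    + exact (filterlim_comp _ _ _ _ _ _ _ _ (filterlim_Rbar_inv p_infty ltac:(discriminate))
               continuous_Kint2_primitive_at_inv_0).
    + unfold Kint2_primitive_at_inv.
      rewrite !pow_i, !Rplus_0_r, sqrt_1, Rinv_1, odd_harm_poly_1, ln_1 by lia.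
      replace (1 + 1) with 2 by ring. ring.
Qed.

Lemma is_RInt_gen_Kint2 :
  is_RInt_gen (Kint2 (2 * n) k) (at_right 0) (Rbar_locally p_infty)
    (2 / INR (2 * n) * (ln 2 - odd_harm (k - 1))).
Proof.
  pose proof (lt_0_INR n n_pos).
  replace (2 / INR (2 * n) * (ln 2 - odd_harm (k - 1)))
    with (/ INR n * (ln 2 - odd_harm (k - 1)) - 0)
    by (rewrite mult_INR; simpl; field; lra).
  apply (is_RInt_gen_primitive _ (is_interval_gt 0) (at_right_gt 0)
           (Rbar_locally_p_infty_gt 0) Kint2_primitive).
  - intros t Ht. rewrite Kint2_eq by exact Ht. apply is_derive_Kint2_primitive. lra.
  - intros t Ht. apply ex_derive_continuous_R. unfold Kint2, Rpower.
    pose proof (one_plus_pow_pos (n + (n + 0)) t Ht).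
    auto_derive. repeat split; try lra; apply Rgt_not_eq, exp_pos.
  - exact filterlim_Kint2_primitive_0.
  - exact filterlim_Kint2_primitive_p_infty.
Qed.

End Kint2Integral.

Lemma is_RInt_gen_Kint1 m j k :
  (1 <= m)%nat -> (1 <= k)%nat -> (1 <= j)%nat -> (2 * j <= m + 1)%nat ->
  is_RInt_gen (Kint1 m j k) (at_right 0) (Rbar_locally p_infty)
    (- ((2 * INR k - 1) / (INR m + 2 - 2 * INR j)
        * Beta (INR k - (INR j - 1) / INR m) (/ 2 + (INR j - 1) / INR m))).
Proof.
  intros Hm Hk Hj Hjm.
  pose proof (le_INR _ _ Hm) as Hm'. pose proof (le_INR _ _ Hk) as Hk'.
  pose proof (le_INR _ _ Hj) as Hj'. pose proof (le_INR _ _ Hjm) as Hjm'.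
  rewrite mult_INR, plus_INR in Hjm'. simpl in Hm', Hk', Hj', Hjm'.
  pose proof (is_RInt_gen_power_ratio_sub_power m (INR m * INR k - INR j) (INR m / 2 - INR j)
                (INR k - / 2) Hm ltac:(lra) ltac:(field) ltac:(lra) ltac:(lra)) as H.
  replace ((INR m * INR k - INR j + 1) / INR m) with (INR k - (INR j - 1) / INR m) in H
    by (field; lra).
  replace (INR k - / 2 + 1 - (INR k - (INR j - 1) / INR m))
    with (/ 2 + (INR j - 1) / INR m) in H by (field; lra).
  replace ((INR k - / 2) / (INR m / 2 - INR j + 1))
    with ((2 * INR k - 1) / (INR m + 2 - 2 * INR j)) in H by (field; lra).
  exact H.
Qed.

Lemma is_RInt_gen_Kint1_1_1 m : (1 <= m)%nat ->
  is_RInt_gen (Kint1 m 1 1) (at_right 0) (Rbar_locally p_infty) (- (2 / INR m)).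
Proof.
  intros Hm. pose proof (lt_0_INR m Hm) as Hm'.
  pose proof (is_RInt_gen_Kint1 m 1 1 Hm (le_n 1) (le_n 1) ltac:(lia)) as H.
  replace (INR 1 - (INR 1 - 1) / INR m) with 1 in H by (simpl; field; lra).
  replace (/ 2 + (INR 1 - 1) / INR m) with (/ 2) in H by (simpl; field; lra).
  rewrite Beta_1_half in H.
  replace (- (2 / INR m)) with (- ((2 * INR 1 - 1) / (INR m + 2 - 2 * INR 1) * 2))
    by (simpl; field; lra).
  exact H.
Qed.

Theorem theoremA2 (m k j : nat) :
  (3 <= m)%nat -> (1 <= k)%nat -> (k <= j)%nat -> (2 * j <= m + 2)%nat ->
  (* case j = k = 1 *)
  ((j = 1%nat /\ k = 1%nat) ->
     is_RInt_gen (Kint1 m j k) (at_right 0) (Rbar_locally p_infty)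
       (- (2 / INR m))) /\
  (* case 1 <= k <= j <= (m+1)/2, j <> 1 *)
  ((2 * j <= m + 1)%nat -> j <> 1%nat ->
     is_RInt_gen (Kint1 m j k) (at_right 0) (Rbar_locally p_infty)
       (- ((2 * INR k - 1) / (INR m + 2 - 2 * INR j)
           * Beta (INR k - (INR j - 1) / INR m) (/ 2 + (INR j - 1) / INR m)))) /\
  (* case m even, 1 <= k <= j = (m+2)/2 *)
  (Nat.Even m -> (2 * j = m + 2)%nat ->
     is_RInt_gen (Kint2 m k) (at_right 0) (Rbar_locally p_infty)
       (2 / INR m * (ln 2 - odd_harm (k - 1)))).
Proof.
  intros Hm Hk Hkj Hj. split; [|split].
  - intros [-> ->]. apply is_RInt_gen_Kint1_1_1. lia.
  - intros Hj1 _. apply is_RInt_gen_Kint1; lia.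
  - intros [n ->] _. apply is_RInt_gen_Kint2; lia.
Qed.
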